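(* Let $\theta=[\varphi^T,\mu^T]^T$ and $\theta_0=[\varphi_0^T,\mu_0^T]^T$ belong to $\mathscr{D}(p,r)$ (so $\varphi=\mathrm{vec}(A)$, $\varphi_0=\mathrm{vec}(A_0)$ with $\|A\|_2<1$, $\|A_0\|_2<1$). Then there exists $R(\theta,\theta_0)\in\mathbb{R}^{p\times p}$ such that $$\mathrm{vec}\{\Sigma(\theta)-\Sigma_0\}=D\Sigma(\theta_0)(\theta-\theta_0)+\mathrm{vec}\{R(\theta,\theta_0)\},\qquad \|R(\theta,\theta_0)\|_F\le 16(1+\|M_0\|_2)\|\theta-\theta_0\|_2^2 .$$ In matrix form, with $C_0=(I_p-X_{\varphi_0})^{-1}$, $$\Sigma(\theta)-\Sigma_0=2C_0(X_\varphi-X_{\varphi_0})C_0^T\Sigma_0-2\Sigma_0C_0(X_\varphi-X_{\varphi_0})C_0^T+U_0\{M(\mu)-M_0\}U_0^T+R(\theta,\theta_0).$$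
   Context: Fix integers $1\le r\le p$. For $A\in\mathbb{R}^{(p-r)\times r}$ write $\varphi=\mathrm{vec}(A)$ (column-stacking), $X_\varphi=\begin{bmatrix}0_{r\times r}&-A^{T}\\ A&0\end{bmatrix}$, $I_{p\times r}=\begin{bmatrix}I_r\\0\end{bmatrix}$, and let $U(\varphi)=(I_p+X_\varphi)(I_p-X_\varphi)^{-1}I_{p\times r}$ be the Cayley parameterization, with derivative $DU(\varphi)=2[I_{p\times r}^T(I_p-X_\varphi)^{-T}\otimes(I_p-X_\varphi)^{-1}]\Gamma$, $\Gamma=(I_{p^2}-K_{pp})(\Theta_1^T\otimes\Theta_2^T)$, $\Theta_1=I_{p\times r}^T$, $\Theta_2=[0_{(p-r)\times r},I_{p-r}]$; $K_{pq}$ is the commutation matrix ($\mathrm{vec}(M^T)=K_{pq}\mathrm{vec}(M)$). For a symmetric $r\times r$ matrix $M$, $\mathrm{vech}(M)\in\mathbb{R}^{r(r+1)/2}$ stacks the on-and-below-diagonal entries column by column, $M(\mu)$ is the symmetric matrix with $\mathrm{vech}(M(\mu))=\mu$, and $\mathbb{D}_r$ is the duplication matrix ($\mathrm{vec}(M)=\mathbb{D}_r\mathrm{vech}(M)$). Let $\mathscr{D}(p,r)=\{\theta=[\mathrm{vec}(A)^T,\mu^T]^T: A\in\mathbb{R}^{(p-r)\times r},\|A\|_2<1,\ \mu\in\mathbb{R}^{r(r+1)/2}\}$ and $\Sigma(\theta)=U(\varphi)M(\mu)U(\varphi)^T$. Define $D_\varphi\Sigma(\theta)=(I_{p^2}+K_{pp})\{U(\varphi)M(\mu)\otimes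 I_p\}DU(\varphi)$, $D_\mu\Sigma(\theta)=\{U(\varphi)\otimes U(\varphi)\}\mathbb{D}_r$, $D\Sigma(\theta)=[D_\varphi\Sigma(\theta),\,D_\mu\Sigma(\theta)]$. For the reference point $\theta_0=[\mathrm{vec}(A_0)^T,\mu_0^T]^T$ write $U_0=U(\varphi_0)$, $M_0=M(\mu_0)$, $\Sigma_0=\Sigma(\theta_0)$. *)

From HB Require Import structures.
From mathcomp Require Import all_boot all_order all_algebra.
From mathcomp Require Import classical_sets reals.
From mathcomp.real_closed Require Export mxtens.
Set Implicit Arguments. Unset Strict Implicit. Unset Printing Implicit Defensive.
Import Order.TTheory GRing.Theory Num.Theory.
Local Open Scope ring_scope.

Section Defs.
Variable R : realType.

(* column-stacking vec : vec M has entry M i j at index j*m + i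
   (Kronecker convention of mxtens: index (j,i) |-> j*m + i) *)
Definition vec {m n} (M : 'M[R]_(m, n)) : 'cV[R]_(n * m) :=
  \col_k M (mxtens_unindex k).2 (mxtens_unindex k).1.

Definition unvec {m n} (v : 'cV[R]_(n * m)) : 'M[R]_(m, n) :=
  \matrix_(i, j) v (mxtens_index (j, i)) 0.

(* commutation matrix K_{pq}: vec(M^T) = K_{pq} vec(M) for M : p x q;
   column b of K_{pq} is vec((unvec e_b)^T). *)
Definition commat (p q : nat) : 'M[R]_(p * q, q * p) :=
  \matrix_(a, b) (vec (@unvec p q (delta_mx b 0))^T) a 0.

Definition vnorm {n} (v : 'cV[R]_n) : R := Num.sqrt (\sum_i v i 0 ^+ 2).
Definition fnorm {m n} (M : 'M[R]_(m, n)) : R :=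
  Num.sqrt (\sum_i \sum_j M i j ^+ 2).

Definition specnorm {m n} (M : 'M[R]_(m, n)) : R :=
  sup [set vnorm (M *m x) | x in [set x : 'cV[R]_n | vnorm x <= 1]].

(* vech: on-and-below-diagonal entries, column by column *)
Definition vech_pairs (r : nat) : seq ('I_r * 'I_r) :=
  flatten [seq [seq (i, j) | i <- [seq i <- enum 'I_r | (nat_of_ord j <= nat_of_ord i)%N]]
          | j <- enum 'I_r].

Definition vech_pair (r : nat) (k : nat) : option ('I_r * 'I_r) :=
  nth None [seq Some x | x <- vech_pairs r] k.

Definition vech {r} (M : 'M[R]_r) : 'cV[R]_(r * r.+1 %/ 2) :=
  \col_k (match vech_pair r k with Some (i, j) => M i j | None => 0 end).

(* M(mu): the symmetric matrix with vech(M(mu)) = mu *)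
Definition Mmu {r} (mu : 'cV[R]_(r * r.+1 %/ 2)) : 'M[R]_r :=
  \matrix_(i, j) \sum_(k < r * r.+1 %/ 2)
      (if vech_pair r k == Some (if (j <= i)%N then (i, j) else (j, i))
       then mu k 0 else 0).

(* duplication matrix: vec(M) = D_r vech(M) for symmetric M;
   column k is vec(M(e_k)) *)
Definition dupmx (r : nat) : 'M[R]_(r * r, r * r.+1 %/ 2) :=
  \matrix_(a, k) vec (Mmu (delta_mx k 0)) a 0.

(* Cayley parameterization, p = r + q *)
Variables r q : nat.

Definition Xphi (A : 'M[R]_(q, r)) : 'M[R]_(r + q) :=
  block_mx (0 : 'M_(r, r)) (- A^T) A (0 : 'M_(q, q)).

Definition Ipr : 'M[R]_(r + q, r) := col_mx 1%:M 0.
Definition Theta1 : 'M[R]_(r, r + q) := Ipr^T.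
Definition Theta2 : 'M[R]_(q, r + q) := row_mx 0 1%:M.

Definition Ucay (A : 'M[R]_(q, r)) : 'M[R]_(r + q, r) :=
  (1%:M + Xphi A) *m invmx (1%:M - Xphi A) *m Ipr.

Definition Gam : 'M[R]_((r + q) * (r + q), r * q) :=
  (1%:M - commat (r + q) (r + q)) *m (Theta1^T *t Theta2^T).

Definition DU (A : 'M[R]_(q, r)) : 'M[R]_(r * (r + q), r * q) :=
  2%:R *: ((Ipr^T *m (invmx (1%:M - Xphi A))^T) *t invmx (1%:M - Xphi A))
  *m Gam.

Definition Sigma (A : 'M[R]_(q, r)) (mu : 'cV[R]_(r * r.+1 %/ 2))
  : 'M[R]_(r + q) := Ucay A *m Mmu mu *m (Ucay A)^T.

Definition DphiSigma A mu : 'M[R]_((r + q) * (r + q), r * q) :=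
  (1%:M + commat (r + q) (r + q))
  *m ((Ucay A *m Mmu mu) *t (1%:M : 'M[R]_(r + q))) *m DU A.

Definition DmuSigma A : 'M[R]_((r + q) * (r + q), r * r.+1 %/ 2) :=
  (Ucay A *t Ucay A) *m dupmx r.

Definition DSigma A mu :=
  row_mx (DphiSigma A mu) (DmuSigma A).

Definition theta (A : 'M[R]_(q, r)) (mu : 'cV[R]_(r * r.+1 %/ 2))
  : 'cV[R]_(r * q + r * r.+1 %/ 2) := col_mx (vec A) mu.

End Defs.

From HB Require Import structures.
From mathcomp Require Import all_boot all_order all_algebra.
From mathcomp Require Import classical_sets reals.
From mathcomp.real_closed Require Import mxtens.
From mathcomp Require Import ring lra.
Import Order.TTheory GRing.Theory Num.Theory.
Local Open Scope ring_scope.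
Set Implicit Arguments. Unset Strict Implicit. Unset Printing Implicit Defensive.

(* For a skew-symmetric X the matrices I +- X
   are invertible, (I - X)^{-1} is a contraction and the Cayley transform
   (I + X)(I - X)^{-1} is an isometry (all in the Frobenius/Euclidean norm).
   Writing C = (I - X)^{-1}, the resolvent identity gives
     U - U0 = 2 C (X - X0) C0 P = 2 C0 D C0 P + 2 C D C0 D C0 P,
   a first-order term plus a term of order ||D||^2, where D = X - X0.
   Substituting into U M U^T - U0 M0 U0^T isolates the linear part
     2 C0 D C0^T Sigma0 - 2 Sigma0 C0 D C0^T + U0 (M - M0) U0^T
   and a remainder bounded by 8 ||M0||_2 ||D||_F^2 + 4 ||D||_F ||M - M0||_F. *)

Section Frobenius.
Variable R : realType.

Definition frob2 {m n} (M : 'M[R]_(m, n)) : R := \sum_i \sum_j M i j ^+ 2.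
Definition frobdot {m n} (A B : 'M[R]_(m, n)) : R := \sum_i \sum_j A i j * B i j.

Lemma frob2_ge0 m n (M : 'M[R]_(m, n)) : 0 <= frob2 M.
Proof. by apply: sumr_ge0 => i _; apply: sumr_ge0 => j _; apply: sqr_ge0. Qed.

Lemma fnormE m n (M : 'M[R]_(m, n)) : fnorm M = Num.sqrt (frob2 M).
Proof. by []. Qed.

Lemma fnorm_ge0 m n (M : 'M[R]_(m, n)) : 0 <= fnorm M.
Proof. exact: sqrtr_ge0. Qed.

Lemma fnorm_sqr m n (M : 'M[R]_(m, n)) : fnorm M ^+ 2 = frob2 M.
Proof. by rewrite fnormE sqr_sqrtr // frob2_ge0. Qed.

Lemma vnorm_fnorm n (v : 'cV[R]_n) : vnorm v = fnorm v.
Proof. by rewrite /vnorm /fnorm; congr Num.sqrt; apply: eq_bigr => i _; rewrite big_ord1. Qed.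

Lemma fnorm_le m n (M : 'M[R]_(m, n)) K : 0 <= K -> frob2 M <= K ^+ 2 -> fnorm M <= K.
Proof. by move=> K0 H; rewrite fnormE -(ger0_norm K0) -sqrtr_sqr ler_wsqrtr. Qed.

(* Cauchy-Schwarz inequality for finite sums, via Lagrange's identity. *)
Lemma sum_CauchySchwarz (I : finType) (a b : I -> R) :
  (\sum_i a i * b i) ^+ 2 <= (\sum_i a i ^+ 2) * (\sum_i b i ^+ 2).
Proof.
have lagrange_ge0 : 0 <= \sum_i \sum_j (a i * b j - a j * b i) ^+ 2.
  by apply: sumr_ge0 => i _; apply: sumr_ge0 => j _; apply: sqr_ge0.
have E1 : (\sum_i a i ^+ 2) * (\sum_i b i ^+ 2) = \sum_i \sum_j a i ^+ 2 * b j ^+ 2.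
  by rewrite mulr_suml; apply: eq_bigr => i _; rewrite mulr_sumr.
have E2 : (\sum_i a i * b i) ^+ 2 = \sum_i \sum_j (a i * b i) * (a j * b j).
  by rewrite expr2 mulr_suml; apply: eq_bigr => i _; rewrite mulr_sumr.
have E3 : \sum_i \sum_j a i ^+ 2 * b j ^+ 2 = \sum_i \sum_j a j ^+ 2 * b i ^+ 2.
  by rewrite exchange_big.
have E4 : \sum_i \sum_j (a i * b j - a j * b i) ^+ 2 =
   \sum_i \sum_j a i ^+ 2 * b j ^+ 2 + \sum_i \sum_j a j ^+ 2 * b i ^+ 2
   - 2%:R * \sum_i \sum_j (a i * b i) * (a j * b j).
  rewrite mulr_sumr -!big_split -sumrB; apply: eq_bigr => i _.
  rewrite mulr_sumr -!big_split -sumrB; apply: eq_bigr => j _ /=; ring.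
rewrite E4 -E3 -E2 -E1 in lagrange_ge0; lra.
Qed.

Lemma frobdot_sqr_le m n (A B : 'M[R]_(m, n)) : frobdot A B ^+ 2 <= frob2 A * frob2 B.
Proof.
rewrite /frobdot /frob2 !(pair_bigA _ (fun i j => _)).
exact: (sum_CauchySchwarz (fun p => A p.1 p.2) (fun p => B p.1 p.2)).
Qed.

Lemma frob2D m n (A B : 'M[R]_(m, n)) :
  frob2 (A + B) = frob2 A + 2%:R * frobdot A B + frob2 B.
Proof.
rewrite /frob2 /frobdot mulr_sumr -!big_split; apply: eq_bigr => i _.
rewrite mulr_sumr -!big_split; apply: eq_bigr => j _ /=; rewrite mxE; ring.
Qed.

Lemma fnormD m n (A B : 'M[R]_(m, n)) : fnorm (A + B) <= fnorm A + fnorm B.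
Proof.
apply: fnorm_le; first by rewrite addr_ge0 // fnorm_ge0.
rewrite frob2D sqrrD !fnorm_sqr lerD2r lerD2l.
have dot_le : `|frobdot A B| <= fnorm A * fnorm B.
  rewrite -ler_sqr ?nnegrE ?mulr_ge0 ?fnorm_ge0 // real_normK ?num_real //.
  by rewrite exprMn !fnorm_sqr frobdot_sqr_le.
have := le_trans (ler_norm _) dot_le; rewrite -mulr_natl; lra.
Qed.

Lemma frob2N m n (A : 'M[R]_(m, n)) : frob2 (- A) = frob2 A.
Proof. by apply: eq_bigr => i _; apply: eq_bigr => j _; rewrite mxE sqrrN. Qed.

Lemma frob2Z m n c (A : 'M[R]_(m, n)) : frob2 (c *: A) = c ^+ 2 * frob2 A.
Proof.
rewrite /frob2 mulr_sumr; apply: eq_bigr => i _; rewrite mulr_sumr.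
by apply: eq_bigr => j _; rewrite mxE exprMn.
Qed.

Lemma fnormZ m n c (A : 'M[R]_(m, n)) : fnorm (c *: A) = `|c| * fnorm A.
Proof. by rewrite !fnormE frob2Z sqrtrM ?sqr_ge0 // sqrtr_sqr. Qed.

Lemma frob2_tr m n (A : 'M[R]_(m, n)) : frob2 A^T = frob2 A.
Proof.
by rewrite /frob2 exchange_big; apply: eq_bigr => i _; apply: eq_bigr => j _; rewrite mxE.
Qed.

Lemma fnorm_tr m n (A : 'M[R]_(m, n)) : fnorm A^T = fnorm A.
Proof. by rewrite !fnormE frob2_tr. Qed.

Lemma frob2_eq0 m n (M : 'M[R]_(m, n)) : frob2 M = 0 -> M = 0.
Proof.
move=> /eqP; rewrite psumr_eq0; last by move=> i _; apply: sumr_ge0 => j _; apply: sqr_ge0.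
move=> /allP row0; apply/matrixP => i j; rewrite mxE.
have /implyP := row0 i (mem_index_enum _) => /(_ isT).
rewrite psumr_eq0; last by move=> *; apply: sqr_ge0.
by move=> /allP /(_ j (mem_index_enum _)) /implyP /(_ isT); rewrite sqrf_eq0 => /eqP.
Qed.

Lemma frob2_0 m n : frob2 (0 : 'M[R]_(m, n)) = 0.
Proof. by rewrite /frob2 big1 // => i _; rewrite big1 // => j _; rewrite mxE expr0n. Qed.

Lemma fnorm0 m n : fnorm (0 : 'M[R]_(m, n)) = 0.
Proof. by rewrite fnormE frob2_0 sqrtr0. Qed.

Lemma frob2_col_mx m1 m2 n (A : 'M[R]_(m1, n)) (B : 'M[R]_(m2, n)) :
  frob2 (col_mx A B) = frob2 A + frob2 B.
Proof.
by rewrite /frob2 big_split_ord /=; congr (_ + _); apply: eq_bigr => i _;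
  apply: eq_bigr => j _; rewrite ?col_mxEu ?col_mxEd.
Qed.

Lemma frob2_row_mx m n1 n2 (A : 'M[R]_(m, n1)) (B : 'M[R]_(m, n2)) :
  frob2 (row_mx A B) = frob2 A + frob2 B.
Proof. by rewrite -frob2_tr tr_row_mx frob2_col_mx !frob2_tr. Qed.

(* Submultiplicativity, from Cauchy-Schwarz applied to each entry. *)
Lemma fnorm_mul m n p (A : 'M[R]_(m, n)) (B : 'M[R]_(n, p)) :
  fnorm (A *m B) <= fnorm A * fnorm B.
Proof.
apply: fnorm_le; first by rewrite mulr_ge0 ?fnorm_ge0.
rewrite exprMn !fnorm_sqr /frob2 [X in _ <= _ * X]exchange_big /= mulr_suml.
apply: ler_sum => i _; rewrite mulr_sumr; apply: ler_sum => j _; rewrite mxE.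
exact: (sum_CauchySchwarz (fun k => A i k) (fun k => B k j)).
Qed.

Lemma fnorm_mul_opbound m n p (L : 'M[R]_(m, n)) k (B : 'M[R]_(n, p)) : 0 <= k ->
  (forall x : 'cV_n, fnorm (L *m x) <= k * fnorm x) -> fnorm (L *m B) <= k * fnorm B.
Proof.
move=> k0 Lk; apply: fnorm_le; first by rewrite mulr_ge0 ?fnorm_ge0.
have frob2_cols m' n' (M : 'M[R]_(m', n')) : frob2 M = \sum_j frob2 (col j M).
  rewrite /frob2 exchange_big; apply: eq_bigr => j _; apply: eq_bigr => i _.
  by rewrite big_ord1 mxE.
rewrite exprMn fnorm_sqr !frob2_cols mulr_sumr; apply: ler_sum => j _.
rewrite !colE -mulmxA -!fnorm_sqr -exprMn.
by apply: lerXn2r; rewrite ?nnegrE ?fnorm_ge0 ?mulr_ge0 ?fnorm_ge0 ?Lk.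
Qed.

Lemma fnorm_mul_contr m n p (L : 'M[R]_(m, n)) (B : 'M[R]_(n, p)) :
  (forall x : 'cV_n, fnorm (L *m x) <= fnorm x) -> fnorm (L *m B) <= fnorm B.
Proof.
move=> Lc; rewrite -[fnorm B]mul1r; apply: fnorm_mul_opbound; first exact: ler01.
by move=> x; rewrite mul1r.
Qed.

Lemma specnorm_has_sup m n (M : 'M[R]_(m, n)) :
  has_sup [set vnorm (M *m x) | x in [set x : 'cV[R]_n | vnorm x <= 1]].
Proof.
split.
  by exists 0; exists 0; rewrite /= vnorm_fnorm ?mulmx0 fnorm0 ?ler01.
exists (fnorm M) => y [x /= x1 <-]; rewrite !vnorm_fnorm in x1 *.
apply: le_trans (fnorm_mul _ _) _.
by rewrite -{2}[fnorm M]mulr1 ler_wpM2l ?fnorm_ge0.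
Qed.

Lemma specnorm_ge0 m n (M : 'M[R]_(m, n)) : 0 <= specnorm M.
Proof.
apply: (sup_upper_bound (specnorm_has_sup M)).
by exists 0; rewrite /= vnorm_fnorm ?mulmx0 fnorm0 ?ler01.
Qed.

Lemma specnormP m n (M : 'M[R]_(m, n)) (x : 'cV[R]_n) :
  fnorm (M *m x) <= specnorm M * fnorm x.
Proof.
have [x0|xn0] := eqVneq (fnorm x) 0.
  have : frob2 x = 0 by rewrite -fnorm_sqr x0 expr0n.
  by move=> /frob2_eq0 ->; rewrite mulmx0 !fnorm0 mulr0.
have xp : 0 < fnorm x by rewrite lt_def xn0 fnorm_ge0.
have : vnorm (M *m ((fnorm x)^-1 *: x)) <= specnorm M.
  apply: (sup_upper_bound (specnorm_has_sup M)); exists ((fnorm x)^-1 *: x) => //=.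
  by rewrite vnorm_fnorm fnormZ ger0_norm ?invr_ge0 ?fnorm_ge0 // mulVf.
rewrite vnorm_fnorm -scalemxAr fnormZ ger0_norm ?invr_ge0 ?fnorm_ge0 //.
by rewrite ler_pdivrMl // mulrC.
Qed.

End Frobenius.

Section SkewCayley.
Variables (R : realType) (n : nat).
Implicit Types (X : 'M[R]_n) (v w : 'cV[R]_n).

Lemma unitmx_of_trmx_inj (A : 'M[R]_n) :
  (forall v, A^T *m v = 0 -> v = 0) -> A \in unitmx.
Proof.
move=> inj; have ker0 : kermx A = 0.
  apply/row_matrixP => i; rewrite row0.
  have : row i (kermx A) *m A = 0 by apply/sub_kermxP; rewrite row_sub.
  move=> /(congr1 trmx); rewrite trmx_mul trmx0 => /inj /(congr1 trmx).
  by rewrite trmxK trmx0.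
have : \rank (kermx A) = 0%N by rewrite ker0 mxrank0.
rewrite mxrank_ker => /eqP; rewrite subn_eq0 => rank_full.
by rewrite -row_free_unit /row_free eqn_leq rank_leq_row rank_full.
Qed.

(* -X is skew-symmetric with X; it lets the lemmas stated for I + X
   apply to I - X. *)
Lemma skewN X : X^T = - X -> (- X)^T = - - X.
Proof. by move=> sk; rewrite linearN /= sk. Qed.

Lemma frobdot_skew X v : X^T = - X -> frobdot v (X *m v) = 0.
Proof.
move=> sk; have quad : (v^T *m X *m v)^T 0 0 = - (v^T *m X *m v) 0 0.
  by rewrite !trmx_mul trmxK sk mulNmx mulmxN mulmxA mxE.
have -> : frobdot v (X *m v) = (v^T *m X *m v) 0 0.
  rewrite /frobdot -mulmxA [RHS]mxE; apply: eq_bigr => i _.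
  by rewrite big_ord1 [v^T 0 i]mxE.
by move: quad; rewrite mxE; lra.
Qed.

Lemma frob2_skew X v : X^T = - X -> frob2 ((1%:M + X) *m v) = frob2 v + frob2 (X *m v).
Proof. by move=> sk; rewrite mulmxDl mul1mx frob2D frobdot_skew // mulr0 addr0. Qed.

Lemma unitmx_skew X : X^T = - X -> 1%:M + X \in unitmx.
Proof.
move=> sk; apply: unitmx_of_trmx_inj => v.
rewrite linearD /= trmx1 sk => vker.
have := frob2_skew v (skewN sk); rewrite vker frob2_0 mulNmx frob2N => sum0.
apply: frob2_eq0; have := frob2_ge0 v; have := frob2_ge0 (X *m v); lra.
Qed.

Lemma contr_inv_skew X w : X^T = - X -> fnorm (invmx (1%:M + X) *m w) <= fnorm w.
Proof.
move=> sk; set v := invmx _ *m w.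
have -> : w = (1%:M + X) *m v by rewrite /v mulmxA mulmxV ?mul1mx // unitmx_skew.
by rewrite !fnormE ler_wsqrtr // frob2_skew // lerDl frob2_ge0.
Qed.

Lemma cayley_isometry X w : X^T = - X ->
  fnorm ((1%:M + X) *m invmx (1%:M - X) *m w) = fnorm w.
Proof.
move=> sk; rewrite -mulmxA; set v := invmx _ *m w.
have -> : w = (1%:M - X) *m v by rewrite /v mulmxA mulmxV ?mul1mx // unitmx_skew ?skewN.
by rewrite !fnormE frob2_skew // frob2_skew ?skewN // mulNmx frob2N.
Qed.

Lemma trmx_cayley_inv X : X^T = - X -> (invmx (1%:M - X))^T = invmx (1%:M + X).
Proof. by move=> sk; rewrite trmx_inv linearB /= trmx1 sk opprK. Qed.

Lemma cayley_affine X : 1%:M - X \in unitmx ->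
  (1%:M + X) *m invmx (1%:M - X) = 2%:R *: invmx (1%:M - X) - 1%:M.
Proof.
move=> unitB.
have -> : 1%:M + X = 2%:R *: 1%:M - (1%:M - X).
  by apply/matrixP => i j; rewrite !mxE; ring.
by rewrite mulmxBl -scalemxAl mul1mx mulmxV.
Qed.

Lemma invmx_resolvent (A B : 'M[R]_n) : A \in unitmx -> B \in unitmx ->
  invmx A - invmx B = invmx A *m (B - A) *m invmx B.
Proof.
move=> uA uB; rewrite mulmxBr mulmxBl -mulmxA mulmxV // mulmx1.
by rewrite mulVmx // mul1mx.
Qed.

End SkewCayley.

Section Vectorisation.
Variable R : realType.

Lemma sum_mxtens_index m n (F : 'I_(m * n) -> R) :
  \sum_t F t = \sum_i \sum_j F (mxtens_index (i, j)).
Proof.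
rewrite pair_big /=; apply: reindex => /=.
by exists (@mxtens_unindex m n) => t _; rewrite (mxtens_indexK, mxtens_unindexK) //; case: t.
Qed.

Lemma vecE m n (M : 'M[R]_(m, n)) i j : vec M (mxtens_index (j, i)) 0 = M i j.
Proof. by rewrite mxE mxtens_indexK. Qed.

Lemma vecD m n (A B : 'M[R]_(m, n)) : vec (A + B) = vec A + vec B.
Proof.
apply/matrixP => k z; rewrite [z]ord1; case: (mxtens_indexP k) => j i.
by rewrite [in RHS]mxE !vecE mxE.
Qed.

Lemma vecZ m n c (A : 'M[R]_(m, n)) : vec (c *: A) = c *: vec A.
Proof.
apply/matrixP => k z; rewrite [z]ord1; case: (mxtens_indexP k) => j i.
by rewrite [in RHS]mxE !vecE mxE.
Qed.

Lemma vecN m n (A : 'M[R]_(m, n)) : vec (- A) = - vec A.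
Proof. by rewrite -scaleN1r vecZ scaleN1r. Qed.

Lemma vecB m n (A B : 'M[R]_(m, n)) : vec (A - B) = vec A - vec B.
Proof. by rewrite vecD vecN. Qed.

Lemma vec_mul m n p s (A : 'M[R]_(m, n)) (X : 'M[R]_(n, p)) (B : 'M[R]_(p, s)) :
  vec (A *m X *m B) = (B^T *t A) *m vec X.
Proof.
apply/matrixP => k z; rewrite [z]ord1; case: (mxtens_indexP k) => c i.
rewrite vecE [in RHS]mxE sum_mxtens_index [LHS]mxE; apply: eq_bigr => l _.
rewrite [(A *m X) i l]mxE mulr_suml; apply: eq_bigr => j _.
by rewrite tensmxE vecE [B^T c l]mxE mulrC mulrA.
Qed.

Lemma commat_vec p q (M : 'M[R]_(p, q)) : commat R p q *m vec M = vec M^T.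
Proof.
apply/matrixP => k z; rewrite [z]ord1; case: (mxtens_indexP k) => i j.
rewrite vecE [LHS]mxE (bigD1 (mxtens_index (j, i))) //= big1.
  rewrite addr0 vecE [commat R p q _ _]mxE vecE [_^T j i]mxE [unvec _ i j]mxE.
  by rewrite [delta_mx _ _ _ _]mxE !eqxx mul1r [M^T j i]mxE.
move=> b hb; rewrite [commat R p q _ _]mxE vecE [_^T j i]mxE [unvec _ i j]mxE.
by rewrite [delta_mx _ _ _ _]mxE eq_sym (negbTE hb) mul0r.
Qed.

Lemma frob2_vec m n (M : 'M[R]_(m, n)) : frob2 (vec M) = frob2 M.
Proof.
rewrite {1}/frob2 sum_mxtens_index /frob2 exchange_big.
by apply: eq_bigr => j _; apply: eq_bigr => i _; rewrite big_ord1 vecE.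
Qed.

End Vectorisation.

Section HalfVectorisation.
Variables (R : realType) (r : nat).
Local Notation N := (r * r.+1 %/ 2)%N.

Definition opair (i j : 'I_r) := if (j <= i)%N then (i, j) else (j, i).

Lemma MmuE (v : 'cV[R]_N) i j :
  Mmu v i j = \sum_(k < N) (if vech_pair r k == Some (opair i j) then v k 0 else 0).
Proof. by rewrite mxE. Qed.

Lemma opairC i j : opair i j = opair j i.
Proof.
rewrite /opair; case: (ltngtP i j) => h //.
by have -> : i = j by apply: val_inj.
Qed.

Lemma Mmu_sym (v : 'cV[R]_N) : (Mmu v)^T = Mmu v.
Proof. by apply/matrixP => i j; rewrite mxE !MmuE opairC. Qed.

Lemma MmuB (a b : 'cV[R]_N) : Mmu (a - b) = Mmu a - Mmu b.
Proof.
apply/matrixP => i j; rewrite [RHS]mxE [(- Mmu b) i j]mxE !MmuE -sumrN -big_split /=.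
by apply: eq_bigr => k _; case: (vech_pair r k == _); rewrite ?subr0 // !mxE.
Qed.

Lemma dupmx_mul (v : 'cV[R]_N) : dupmx R r *m v = vec (Mmu v).
Proof.
apply/matrixP => a z; rewrite [z]ord1; case: (mxtens_indexP a) => j i.
rewrite vecE [LHS]mxE MmuE; apply: eq_bigr => k _.
rewrite [dupmx R r _ _]mxE vecE MmuE (bigD1 k) //= big1 ?addr0.
  by rewrite [delta_mx _ _ _ _]mxE !eqxx; case: ifP; rewrite ?mul1r ?mul0r.
by move=> l hl; rewrite [delta_mx _ _ _ _]mxE (negbTE hl); case: ifP.
Qed.

Lemma vech_pairs_uniq : uniq (vech_pairs r).
Proof.
apply: (@allpairs_uniq_dep 'I_r (fun _ => 'I_r) _ (fun j i => (i, j)) (enum 'I_r)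
  (fun j : 'I_r => [seq i <- enum 'I_r | (nat_of_ord j <= nat_of_ord i)%N])).
- exact: enum_uniq.
- by move=> j _; apply: filter_uniq; apply: enum_uniq.
- by move=> [x1 y1] [x2 y2] _ _ /= [-> ->].
Qed.

Lemma vech_pair_inj (k1 k2 : nat) x :
  vech_pair r k1 = Some x -> vech_pair r k2 = Some x -> k1 = k2.
Proof.
have nthP k : vech_pair r k = Some x ->
    (k < size (vech_pairs r))%N /\ nth x (vech_pairs r) k = x.
  rewrite /vech_pair; case: (ltnP k (size (vech_pairs r))) => h.
    by rewrite (nth_map x) //; case=> ->.
  by rewrite nth_default // size_map.
move=> /nthP [h1 e1] /nthP [h2 e2].
by apply/eqP; rewrite -(nth_uniq x h1 h2 vech_pairs_uniq) e1 e2.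
Qed.

(* Each vech coordinate appears in M(mu) at most twice: at (a, b) and (b, a). *)
Lemma vech_multiplicity_le2 (k : nat) :
  \sum_(i < r) \sum_(j < r) (if vech_pair r k == Some (opair i j) then 1 else 0 : R) <= 2%:R.
Proof.
have sum_delta (a b : 'I_r) :
    \sum_(i < r) \sum_(j < r) (if (i == a) && (j == b) then 1 else 0 : R) = 1.
  rewrite (bigD1 a) //= [Y in _ + Y]big1 => [|i hi]; last first.
    by apply: big1 => j _; rewrite (negbTE hi).
  rewrite addr0 (bigD1 b) //= !eqxx /= [Y in _ + Y]big1 ?addr0 // => j hj.
  by rewrite (negbTE hj).
case e: (vech_pair r k) => [[a b]|]; last first.
  by rewrite big1 ?ler0n // => i _; rewrite big1.
apply: (@le_trans _ _ (\sum_(i < r) \sum_(j < r)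
   ((if (i == a) && (j == b) then 1 else 0) + (if (i == b) && (j == a) then 1 else 0) : R))).
  apply: ler_sum => i _; apply: ler_sum => j _.
  have if01 (c : bool) : 0 <= (if c then 1 else 0 : R) by case: c; rewrite ?ler01.
  rewrite /opair; case: (j <= i)%N => /=; case: (Some (a, b) =P _) => [[-> ->]|_];
    rewrite ?addr_ge0 ?if01 // !eqxx /= ?lerDl ?lerDr ?if01 //.
under eq_bigr do rewrite big_split.
by rewrite big_split /= !sum_delta.
Qed.

(* Since each position is hit by at most one coordinate of mu, squaring an
   entry of M(mu) squares that coordinate. *)
Lemma Mmu_entry_sqr (v : 'cV[R]_N) i j :
  Mmu v i j ^+ 2 = \sum_(k < N) (if vech_pair r k == Some (opair i j) then v k 0 ^+ 2 else 0).
Proof.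
rewrite MmuE; case: (pickP (fun k : 'I_N => vech_pair r k == Some (opair i j))) => [k0 hk0|none].
  have others (k : 'I_N) : k != k0 -> (vech_pair r k == Some (opair i j)) = false.
    move=> hk; apply/negbTE; apply: contra hk => /eqP hk'.
    by apply/eqP/val_inj; apply: (vech_pair_inj hk'); apply/eqP.
  rewrite (bigD1 k0) //= hk0 big1 ?addr0; last by move=> k hk; rewrite others.
  by rewrite (bigD1 k0) //= hk0 big1 ?addr0 // => k hk; rewrite others.
by rewrite !big1 ?expr0n // => k _; rewrite none.
Qed.

Lemma frob2_Mmu (v : 'cV[R]_N) : frob2 (Mmu v) <= 2%:R * frob2 v.
Proof.
rewrite /frob2.
under eq_bigr do under eq_bigr do rewrite Mmu_entry_sqr.
under eq_bigr do rewrite exchange_big.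
rewrite exchange_big mulr_sumr; apply: ler_sum => k _; rewrite big_ord1.
have -> : \sum_(i < r) \sum_(j < r)
      (if vech_pair r k == Some (opair i j) then v k 0 ^+ 2 else 0)
  = v k 0 ^+ 2 * \sum_(i < r) \sum_(j < r)
      (if vech_pair r k == Some (opair i j) then 1 else 0 : R).
  rewrite mulr_sumr; apply: eq_bigr => i _; rewrite mulr_sumr; apply: eq_bigr => j _.
  by case: ifP; rewrite ?mulr1 ?mulr0.
by rewrite mulrC ler_wpM2r ?sqr_ge0 ?vech_multiplicity_le2.
Qed.

End HalfVectorisation.

Section RemainderAlgebra.
Variable R : realType.

(* Expansion of a perturbed congruence (U0 + dU)(M0 + dM)(U0 + dU)^T with
   dU = lU + eU: after removing the constant and the terms linear in lU
   and dM, every remaining term contains eU or two perturbations. *)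
Lemma congruence_expand m k (U0 lU eU : 'M[R]_(m, k)) (M0 dM : 'M[R]_k) :
  (U0 + (lU + eU)) *m (M0 + dM) *m (U0 + (lU + eU))^T - U0 *m M0 *m U0^T
  - (lU *m M0 *m U0^T + U0 *m M0 *m lU^T + U0 *m dM *m U0^T)
  = eU *m M0 *m U0^T + U0 *m M0 *m eU^T + (lU + eU) *m M0 *m (lU + eU)^T
    + (lU + eU) *m dM *m (U0 + (lU + eU))^T + U0 *m dM *m (lU + eU)^T.
Proof.
rewrite !linearD /= !(mulmxDl, mulmxDr).
by apply/matrixP => i j; rewrite !mxE; ring.
Qed.

Lemma fnorm_mul_contr_tr m n p (B : 'M[R]_(m, n)) (L : 'M[R]_(p, n)) :
  (forall x : 'cV_n, fnorm (L *m x) <= fnorm x) -> fnorm (B *m L^T) <= fnorm B.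
Proof. by move=> Lc; rewrite -fnorm_tr trmx_mul trmxK -[fnorm B]fnorm_tr fnorm_mul_contr. Qed.

Lemma congruence_remainder_bound n k (U0 lU eU : 'M[R]_(n, k)) (M0 dM : 'M[R]_k)
    (s a b y : R) :
  0 <= s -> M0^T = M0 ->
  (forall w : 'cV_k, fnorm (M0 *m w) <= s * fnorm w) ->
  (forall w : 'cV_k, fnorm (U0 *m w) <= fnorm w) ->
  (forall w : 'cV_k, fnorm ((U0 + (lU + eU)) *m w) <= fnorm w) ->
  fnorm eU <= a -> fnorm (lU + eU) <= b -> fnorm dM <= y ->
  fnorm (eU *m M0 *m U0^T + U0 *m M0 *m eU^T + (lU + eU) *m M0 *m (lU + eU)^T
    + (lU + eU) *m dM *m (U0 + (lU + eU))^T + U0 *m dM *m (lU + eU)^T)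
  <= 2%:R * s * a + s * b * b + 2%:R * b * y.
Proof.
move=> s0 symM0 M0s U0c Uc ea dUb dMy.
set dU := lU + eU in Uc dUb *; set U := U0 + dU in Uc *.
have b0 : 0 <= b := le_trans (fnorm_ge0 _) dUb.
have M0_tr (B : 'M[R]_(n, k)) : fnorm (M0 *m B^T) <= s * fnorm B.
  by rewrite -[fnorm B]fnorm_tr; apply: fnorm_mul_opbound.
have T1 : fnorm (eU *m M0 *m U0^T) <= s * a.
  apply: le_trans (fnorm_mul_contr_tr _ U0c) _.
  rewrite -fnorm_tr trmx_mul symM0; apply: le_trans (M0_tr _) _; exact: ler_wpM2l.
have T2 : fnorm (U0 *m M0 *m eU^T) <= s * a.
  rewrite -mulmxA; apply: le_trans (fnorm_mul_contr _ U0c) _.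
  apply: le_trans (M0_tr _) _; exact: ler_wpM2l.
have T3 : fnorm (dU *m M0 *m dU^T) <= s * b * b.
  rewrite -mulmxA; apply: le_trans (fnorm_mul _ _) _; rewrite mulrC.
  apply: ler_pM; rewrite ?fnorm_ge0 //; apply: le_trans (M0_tr _) _; exact: ler_wpM2l.
have T4 : fnorm (dU *m dM *m U^T) <= b * y.
  rewrite -mulmxA; apply: le_trans (fnorm_mul _ _) _.
  by apply: ler_pM; rewrite ?fnorm_ge0 //; apply: le_trans (fnorm_mul_contr_tr _ Uc) _.
have T5 : fnorm (U0 *m dM *m dU^T) <= b * y.
  rewrite -mulmxA; apply: le_trans (fnorm_mul_contr _ U0c) _.
  apply: le_trans (fnorm_mul _ _) _; rewrite fnorm_tr mulrC.
  by apply: ler_pM; rewrite ?fnorm_ge0.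
set t1 := eU *m _ *m _ in T1 *; set t2 := U0 *m _ *m _ in T2 *.
set t3 := dU *m M0 *m _ in T3 *; set t4 := dU *m dM *m _ in T4 *.
set t5 := U0 *m dM *m _ in T5 *.
have := fnormD (t1 + t2 + t3 + t4) t5; have := fnormD (t1 + t2 + t3) t4.
have := fnormD (t1 + t2) t3; have := fnormD t1 t2; lra.
Qed.

End RemainderAlgebra.

Section CayleyCovariance.
Variables (R : realType) (r q : nat).
Local Notation P := (Ipr R r q).
Implicit Types (X : 'M[R]_(r + q)) (M : 'M[R]_r).

Definition cayU X : 'M[R]_(r + q, r) := (1%:M + X) *m invmx (1%:M - X) *m P.
Definition cay_cov X M : 'M[R]_(r + q) := cayU X *m M *m (cayU X)^T.
Definition cay_lin X (X0 : 'M[R]_(r + q)) M (M0 : 'M[R]_r) : 'M[R]_(r + q) :=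
  2%:R *: (invmx (1%:M - X0) *m (X - X0) *m (invmx (1%:M - X0))^T *m cay_cov X0 M0)
  - 2%:R *: (cay_cov X0 M0 *m invmx (1%:M - X0) *m (X - X0) *m (invmx (1%:M - X0))^T)
  + cayU X0 *m (M - M0) *m (cayU X0)^T.

Lemma Ipr_isometry (w : 'cV[R]_r) : fnorm (P *m w) = fnorm w.
Proof. by rewrite /Ipr mul_col_mx mul1mx mul0mx !fnormE frob2_col_mx frob2_0 addr0. Qed.

Lemma trIpr_contr (w : 'cV[R]_(r + q)) : fnorm (P^T *m w) <= fnorm w.
Proof.
rewrite /Ipr tr_col_mx trmx1 trmx0 -[w]vsubmxK mul_row_col mul1mx mul0mx addr0.
by rewrite !fnormE ler_wsqrtr // frob2_col_mx lerDl frob2_ge0.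
Qed.

Lemma cayU_isometry X (w : 'cV[R]_r) : X^T = - X -> fnorm (cayU X *m w) = fnorm w.
Proof. by move=> sk; rewrite /cayU -mulmxA cayley_isometry // Ipr_isometry. Qed.

Section Expansion.
Variables (X X0 : 'M[R]_(r + q)) (M M0 : 'M[R]_r).
Hypotheses (skX : X^T = - X) (skX0 : X0^T = - X0) (symM0 : M0^T = M0).
Local Notation C := (invmx (1%:M - X)).
Local Notation C0 := (invmx (1%:M - X0)).
Local Notation D := (X - X0).
(* first-order and second-order parts of cayU X - cayU X0 *)
Local Notation lU := (2%:R *: (C0 *m D *m C0 *m P)).
Local Notation eU := (2%:R *: (C *m D *m C0 *m D *m C0 *m P)).

Lemma unit_cayley_den : 1%:M - X \in unitmx.
Proof. exact: unitmx_skew (skewN skX). Qed.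

Lemma unit_cayley_den0 : 1%:M - X0 \in unitmx.
Proof. exact: unitmx_skew (skewN skX0). Qed.

Lemma cayley_resolvent : C - C0 = C *m D *m C0.
Proof.
rewrite invmx_resolvent ?unit_cayley_den ?unit_cayley_den0 //.
by congr (_ *m _ *m _); apply/matrixP => i j; rewrite !mxE; ring.
Qed.

(* C0^T U0 = C0 I_{p x r}: the identity that turns C0 I_{p x r} (the form
   produced by DU) into C0^T U0 (the form in the statement). *)
Lemma trinv_cayU : C0^T *m cayU X0 = C0 *m P.
Proof.
by rewrite trmx_cayley_inv // /cayU !mulmxA mulVmx ?mul1mx // unitmx_skew.
Qed.

Lemma lU_trinv : lU = 2%:R *: (C0 *m D *m C0^T *m cayU X0).
Proof. by rewrite -mulmxA -trinv_cayU mulmxA. Qed.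

Lemma cay_linE : cay_lin X X0 M M0 =
  lU *m M0 *m (cayU X0)^T + cayU X0 *m M0 *m lU^T + cayU X0 *m (M - M0) *m (cayU X0)^T.
Proof.
have trD : D^T = - D by rewrite linearB /= skX skX0 opprB addrC opprK.
rewrite /cay_lin /cay_cov lU_trinv; move: (cayU X0) => U0; congr (_ + _ + _).
  by rewrite !scalemxAl !mulmxA.
rewrite [(_ *: _)^T]linearZ /= !trmx_mul trmxK trD -scalemxAr.
by rewrite mulNmx !mulmxN scalerN !mulmxA.
Qed.

(* U - U0 = 2 C D C0 I_{p x r}, by the affine form of the Cayley transform
   and the resolvent identity; splitting C = C0 + C D C0 gives lU + eU. *)
Lemma cayU_diff : cayU X - cayU X0 = 2%:R *: (C *m D *m C0 *m P).
Proof.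
rewrite /cayU -mulmxBl !cayley_affine ?unit_cayley_den ?unit_cayley_den0 //.
have -> : 2%:R *: C - 1%:M - (2%:R *: C0 - 1%:M) = 2%:R *: (C - C0).
  by apply/matrixP => i j; rewrite !mxE; ring.
by rewrite cayley_resolvent -scalemxAl.
Qed.

Lemma cayU_split : cayU X - cayU X0 = lU + eU.
Proof.
have eC : C = C0 + C *m D *m C0 by rewrite -cayley_resolvent subrKC.
by rewrite cayU_diff {1}eC !mulmxDl scalerDr.
Qed.

Lemma cayU_perturb : cayU X0 + (lU + eU) = cayU X.
Proof. by rewrite -cayU_split subrKC. Qed.

Lemma cay_remainder_bound :
  fnorm (cay_cov X M - cay_cov X0 M0 - cay_lin X X0 M M0) <=
  8%:R * specnorm M0 * fnorm D ^+ 2 + 4%:R * fnorm D * fnorm (M - M0).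
Proof.
set x := fnorm D; have x0 : 0 <= x := fnorm_ge0 _.
have C_contr (w : 'cV_(r + q)) : fnorm (C *m w) <= fnorm w.
  exact: contr_inv_skew (skewN skX).
have C0_contr (w : 'cV_(r + q)) : fnorm (C0 *m w) <= fnorm w.
  exact: contr_inv_skew (skewN skX0).
have C0T_contr (w : 'cV_(r + q)) : fnorm (C0^T *m w) <= fnorm w.
  by rewrite trmx_cayley_inv //; apply: contr_inv_skew.
have DC0P : fnorm (D *m (C0 *m P)) <= x.
  rewrite -fnorm_tr !trmx_mul -mulmxA; apply: le_trans (fnorm_mul_contr _ trIpr_contr) _.
  by apply: le_trans (fnorm_mul_contr _ C0T_contr) _; rewrite fnorm_tr.
have dU_le : fnorm (lU + eU) <= 2%:R * x.
  rewrite -cayU_split cayU_diff fnormZ ger0_norm ?ler0n // ler_wpM2l ?ler0n //.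
  by rewrite -!mulmxA; apply: le_trans (fnorm_mul_contr _ C_contr) DC0P.
have eU_le : fnorm eU <= 2%:R * x * x.
  rewrite fnormZ ger0_norm ?ler0n // -mulrA ler_wpM2l ?ler0n //.
  rewrite -!mulmxA; apply: le_trans (fnorm_mul_contr _ C_contr) _.
  apply: le_trans (fnorm_mul _ _) _; apply: ler_wpM2l => //.
  exact: le_trans (fnorm_mul_contr _ C0_contr) DC0P.
have U0c (w : 'cV_r) : fnorm (cayU X0 *m w) <= fnorm w by rewrite cayU_isometry.
have Uc (w : 'cV_r) : fnorm ((cayU X0 + (lU + eU)) *m w) <= fnorm w.
  by rewrite cayU_perturb cayU_isometry.
have := congruence_remainder_bound (specnorm_ge0 M0) symM0 (specnormP M0) U0c Uc
  eU_le dU_le (lexx (fnorm (M - M0))).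
rewrite -congruence_expand cayU_perturb subrKC.
rewrite -cay_linE /cay_cov -/x; nra.
Qed.

End Expansion.
End CayleyCovariance.

Section CayleyParameter.
Variables (R : realType) (r q : nat).
Local Notation P := (Ipr R r q).
Implicit Types (A D : 'M[R]_(q, r)) (mu : 'cV[R]_(r * r.+1 %/ 2)).

Lemma UcayE A : Ucay A = cayU (Xphi A).
Proof. by []. Qed.

Lemma Xphi_skew A : (Xphi A)^T = - Xphi A.
Proof. by rewrite /Xphi tr_block_mx opp_block_mx !trmx0 !oppr0 linearN /= trmxK opprK. Qed.

(* The skew-symmetric embedding D |-> Theta2^T D Theta1 - (Theta2^T D Theta1)^T,
   which is the linear map behind Gam and agrees with X_phi on differences. *)
Definition Ymx D : 'M[R]_(r + q) :=
  (Theta2 R r q)^T *m D *m Theta1 R r q - ((Theta2 R r q)^T *m D *m Theta1 R r q)^T.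

Lemma Ymx_Xphi A A0 : Ymx (A - A0) = Xphi A - Xphi A0.
Proof.
rewrite /Ymx /Theta2 /Theta1 /Ipr tr_row_mx tr_col_mx !trmx0 !trmx1.
rewrite mul_col_mx mul0mx mul1mx mul_col_row !mulmx0 mulmx1.
rewrite tr_block_mx !trmx0 /Xphi !opp_block_mx !oppr0 !add_block_mx !addr0 !add0r.
by congr block_mx; rewrite mulmx1 // linearB /= opprB opprK addrC.
Qed.

(* A - A0 appears twice in X_phi - X_phi0. *)
Lemma frob2_XphiB A A0 : frob2 (Xphi A - Xphi A0) = 2%:R * frob2 (A - A0).
Proof.
rewrite /Xphi opp_block_mx add_block_mx block_mxEv frob2_col_mx !frob2_row_mx.
rewrite !oppr0 !addr0 !frob2_0.
have -> : - A^T - - A0^T = - (A - A0)^T by rewrite linearB /= opprB opprK addrC.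
by rewrite frob2N frob2_tr; lra.
Qed.

Lemma Gam_vec D : Gam R r q *m vec D = vec (Ymx D).
Proof. by rewrite /Gam -mulmxA -vec_mul mulmxBl mul1mx commat_vec -vecB. Qed.

Lemma DU_vec A0 D :
  DU A0 *m vec D =
  vec (2%:R *: (invmx (1%:M - Xphi A0) *m Ymx D *m invmx (1%:M - Xphi A0) *m P)).
Proof.
rewrite /DU -[LHS]mulmxA Gam_vec -scalemxAl vecZ.
by rewrite -[in RHS]mulmxA vec_mul trmx_mul.
Qed.

Lemma DphiSigma_vec A0 mu0 D :
  let dU := 2%:R *: (invmx (1%:M - Xphi A0) *m Ymx D *m invmx (1%:M - Xphi A0) *m P) in
  DphiSigma A0 mu0 *m vec D =
  vec (dU *m (Ucay A0 *m Mmu mu0)^T + (dU *m (Ucay A0 *m Mmu mu0)^T)^T).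
Proof.
move=> dU; rewrite /DphiSigma -[LHS]mulmxA -[LHS]mulmxA DU_vec -/dU.
have vecF : vec (1%:M *m dU *m (Ucay A0 *m Mmu mu0)^T) =
    (Ucay A0 *m Mmu mu0 *t 1%:M) *m vec dU by rewrite vec_mul trmxK.
by rewrite mul1mx in vecF; rewrite -vecF mulmxDl mul1mx commat_vec -vecD.
Qed.

Lemma DmuSigma_vec A0 (v : 'cV[R]_(r * r.+1 %/ 2)) :
  DmuSigma A0 *m v = vec (Ucay A0 *m Mmu v *m (Ucay A0)^T).
Proof. by rewrite /DmuSigma -[LHS]mulmxA dupmx_mul vec_mul trmxK. Qed.

Lemma thetaB A A0 mu mu0 :
  theta A mu - theta A0 mu0 = col_mx (vec (A - A0)) (mu - mu0).
Proof. by rewrite /theta opp_col_mx add_col_mx vecB. Qed.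

Lemma DSigma_theta A A0 mu mu0 :
  DSigma A0 mu0 *m (theta A mu - theta A0 mu0) =
  vec (cay_lin (Xphi A) (Xphi A0) (Mmu mu) (Mmu mu0)).
Proof.
rewrite thetaB /DSigma mul_row_col DphiSigma_vec DmuSigma_vec -vecD MmuB.
rewrite cay_linE ?Xphi_skew ?Mmu_sym // Ymx_Xphi -!UcayE.
by congr (vec (_ + _ + _)); move: (Ucay A0) (2%:R *: _) => U dU;
  rewrite !trmx_mul ?trmxK ?Mmu_sym ?mulmxA.
Qed.

Lemma vnorm_theta_sqr A A0 mu mu0 :
  vnorm (theta A mu - theta A0 mu0) ^+ 2 = frob2 (A - A0) + frob2 (mu - mu0).
Proof. by rewrite vnorm_fnorm fnorm_sqr thetaB frob2_col_mx frob2_vec. Qed.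

End CayleyParameter.

Lemma remainder_arith (R : realFieldType) (s x y d e : R) :
  0 <= s -> 0 <= x -> 0 <= y -> 0 <= e -> x ^+ 2 = 2%:R * d -> y ^+ 2 <= 2%:R * e ->
  8%:R * s * x ^+ 2 + 4%:R * x * y <= 16%:R * (1 + s) * (d + e).
Proof.
move=> s0 x0 y0 e0 xd ye.
have xy : 2%:R * x * y <= x ^+ 2 + y ^+ 2 by have := sqr_ge0 (x - y); rewrite sqrrB; lra.
have se : 0 <= s * e by rewrite mulr_ge0.
rewrite xd in xy *; nra.
Qed.

Unset Implicit Arguments. Set Strict Implicit.

Theorem theorem3 (R : realType) (r q : nat) (hr : (1 <= r)%N)
  (A A0 : 'M[R]_(q, r)) (mu mu0 : 'cV[R]_(r * r.+1 %/ 2)) :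
  specnorm A < 1 -> specnorm A0 < 1 ->
  let Sigma0 := Sigma A0 mu0 in
  let C0 := invmx (1%:M - Xphi A0) in
  let U0 := Ucay A0 in
  let M0 := Mmu mu0 in
  let dth := theta A mu - theta A0 mu0 in
  exists Rm : 'M[R]_(r + q),
    [/\ vec (Sigma A mu - Sigma0) = DSigma A0 mu0 *m dth + vec Rm,
        fnorm Rm <= 16%:R * (1 + specnorm M0) * vnorm dth ^+ 2 &
        Sigma A mu - Sigma0 =
          2%:R *: (C0 *m (Xphi A - Xphi A0) *m C0^T *m Sigma0)
        - 2%:R *: (Sigma0 *m C0 *m (Xphi A - Xphi A0) *m C0^T)
        + U0 *m (Mmu mu - M0) *m U0^T + Rm].
Proof.
move=> _ _ Sigma0 C0 U0 M0 dth.
set L := cay_lin (Xphi A) (Xphi A0) (Mmu mu) (Mmu mu0).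
have eL : L = 2%:R *: (C0 *m (Xphi A - Xphi A0) *m C0^T *m Sigma0)
        - 2%:R *: (Sigma0 *m C0 *m (Xphi A - Xphi A0) *m C0^T)
        + U0 *m (Mmu mu - M0) *m U0^T by [].
exists (Sigma A mu - Sigma0 - L); split.
- by rewrite DSigma_theta -/L -vecD subrKC.
- apply: le_trans (cay_remainder_bound _ (Xphi_skew A) (Xphi_skew A0) (Mmu_sym mu0)) _.
  rewrite vnorm_theta_sqr; apply: remainder_arith;
    rewrite ?specnorm_ge0 ?fnorm_ge0 ?frob2_ge0 ?fnorm_sqr ?frob2_XphiB //.
  by rewrite -MmuB frob2_Mmu.
- by rewrite -eL subrKC.
Qed.
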